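(* Let $(\Lambda,d)$ be a $k$-graph and let $(\overline{\Lambda},\overline d)$ be its extension as described in the context. If $\Lambda$ is finitely aligned, then $\overline{\Lambda}$ is finitely aligned. If $\Lambda$ is row-finite, then $\overline{\Lambda}$ is row-finite.
   Context: A $k$-graph $(\Lambda,d)$ is a countable category with a degree functor $d:\Lambda\to\mathbb{N}^k$ satisfying unique factorization; $\Lambda^0$ vertices, $r,s$ range/source, $v\Lambda^n=\{\lambda:r(\lambda)=v,d(\lambda)=n\}$; $e_i$ standard basis, $\le$ coordinatewise, $\vee,\wedge$ coordinatewise max/min. A $k$-graph $\Gamma$ is row-finite if $v\Gamma^n$ is finite for all vertices $v$ and $n\in\mathbb{N}^k$; it is finitely aligned if $\Gamma^{\min}(\lambda,\mu)=\{(\alpha,\beta):\lambda\alpha=\mu\beta,\ d(\lambda\alpha)=d(\lambda)\vee d(\mu)\}$ is finite for all $\lambda,\mu\in\Gamma$. For $m\in(\mathbb{N}\cup\{\infty\})^k$, $\Omega_{k,m}$ has objects $\{p\in\mathbb{N}^k:p\le m\}$, morphisms $(p,q)$, $p\le q\le m$, $r(p,q)=p$, $s(p,q)=q$, $d(p,q)=q-p$. A graph morphism $x:\Omega_{k,m}\to\Lambda$ is a degree-preserving functor; $d(x)=m$, $x(a,b)=x((a,b))$, $x(a)=x(a,a)$. It is a boundary path if there is $n_x\in\mathbb{N}^k$, $n_x\le d(x)$, with $x(p)\Lambda^{e_i}=\emptyset$ whenever $p\in\mathbb{N}^k$, $n_x\le p\le d(x)$, $p_i=d(x)_i$; $\Lambda^{\le\infty}$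 is the set of boundary paths. $\sigma^px(a,b)=x(a+p,b+p)$; $\lambda x$ is the concatenation of $\lambda$ and $x$. $V_\Lambda=\{(x;m):x\in\Lambda^{\le\infty},m\in\mathbb{N}^k,m\not\le d(x)\}$, $(x;m)\approx(y;p)$ iff $x(m\wedge d(x))=y(p\wedge d(y))$ and $m-m\wedge d(x)=p-p\wedge d(y)$; classes $[x;m]$ form $\widetilde{V_\Lambda}$. $P_\Lambda=\{(x;(m,n)):x\in\Lambda^{\le\infty},m\le n\in\mathbb{N}^k,n\not\le d(x)\}$, $(x;(m,n))\sim(y;(p,q))$ iff $x(m\wedge d(x),n\wedge d(x))=y(p\wedge d(y),q\wedge d(y))$, $m-m\wedge d(x)=p-p\wedge d(y)$, $n-m=q-p$; classes $[x;(m,n)]$ form $\widetilde{P_\Lambda}$. The extension $\overline{\Lambda}$ is the $k$-graph with objects $\Lambda^0\sqcup\widetilde{V_\Lambda}$ and morphisms $\Lambda\sqcup\widetilde{P_\Lambda}$: on $\Lambda$ everything is as in $\Lambda$; $\overline r([x;(m,n)])=x(m)$ if $m\le d(x)$, else $[x;m]$; $\overline s([x;(m,n)])=[x;n]$; identity at $[x;m]$ is $[x;(m,m)]$; $\lambda[x;(m,n)]=[\lambda\sigma^mx;(0,d(\lambda)+n-m)]$; $[x;(m,n)][y;(p,q)]=[z;(m,n+q-p)]$ with $z=x(0,n\wedge d(x))\sigma^{p\wedge d(y)}y$; degree $\overline d|_\Lambda=d$, $\overline d([x;(m,n)])=n-m$. *)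

From Stdlib Require Import ClassicalEpsilon List.
From mathcomp Require Import all_boot.
Set Implicit Arguments.
Unset Strict Implicit.
Unset Printing Implicit Defensive.

Definition NN (k : nat) := {ffun 'I_k -> nat}.
Definition nn0 (k : nat) : NN k := [ffun _ => 0].
Definition nnadd k (m n : NN k) : NN k := [ffun i => m i + n i].
(* truncated subtraction; only used when n <= m coordinatewise *)
Definition nnsub k (m n : NN k) : NN k := [ffun i => m i - n i].
Definition nnmax k (m n : NN k) : NN k := [ffun i => maxn (m i) (n i)].
Definition nnmin k (m n : NN k) : NN k := [ffun i => minn (m i) (n i)].
Definition nnle k (m n : NN k) : bool := [forall i, m i <= n i].
Definition nnbasis k (i : 'I_k) : NN k := [ffun j => if j == i then 1 else 0].

(* extended degrees: None stands for infinity *)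
Definition ENN (k : nat) := 'I_k -> option nat.
Definition le_e k (p : NN k) (m : ENN k) : bool :=
  [forall i, match m i with Some a => p i <= a | None => true end].
Definition meet_e k (p : NN k) (m : ENN k) : NN k :=
  [ffun i => match m i with Some a => minn (p i) a | None => p i end].
Definition add_e k (p : NN k) (m : ENN k) : ENN k :=
  fun i => match m i with Some a => Some (p i + a) | None => None end.
Definition sub_e k (m : ENN k) (p : NN k) : ENN k :=
  fun i => match m i with Some a => Some (a - p i) | None => None end.

(* A countable category with a degree functor to N^k satisfying the
   unique factorisation property.  [comp l m] is the composite  l m
   (meaningful when src l = rng m); the value otherwise is irrelevant. *)
Record kgraph (k : nat) := KGraph {
  Obj : Type;
  Mor : Type;
  src : Mor -> Obj;
  rng : Mor -> Obj;
  comp : Mor -> Mor -> Mor;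
  idm : Obj -> Mor;
  deg : Mor -> NN k;
  Obj_countable : exists f : Obj -> nat, injective f;
  Mor_countable : exists f : Mor -> nat, injective f;
  src_idm : forall v, src (idm v) = v;
  rng_idm : forall v, rng (idm v) = v;
  src_comp : forall l m, src l = rng m -> src (comp l m) = src m;
  rng_comp : forall l m, src l = rng m -> rng (comp l m) = rng l;
  comp_idl : forall l, comp (idm (rng l)) l = l;
  comp_idr : forall l, comp l (idm (src l)) = l;
  comp_assoc : forall l m n, src l = rng m -> src m = rng n ->
      comp (comp l m) n = comp l (comp m n);
  deg_idm : forall v, deg (idm v) = nn0 k;
  deg_comp : forall l m, src l = rng m -> deg (comp l m) = nnadd (deg l) (deg m);
  unique_fact : forall l (m n : NN k), deg l = nnadd m n ->
      exists! mn : Mor * Mor,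
        src mn.1 = rng mn.2 /\ comp mn.1 mn.2 = l /\ deg mn.1 = m /\ deg mn.2 = n
}.

Arguments Obj {k} _.
Arguments Mor {k} _.
Arguments src {k _} _.
Arguments rng {k _} _.
Arguments comp {k _} _ _.
Arguments idm {k _} _.
Arguments deg {k _} _.

Section KGraphs.
Variables (k : nat) (G : kgraph k).

Definition row_finite : Prop :=
  forall (v : Obj G) (n : NN k), exists L : list (Mor G),
    forall l : Mor G, rng l = v -> deg l = n -> In l L.

(* finitely aligned: G^min(l,m) finite for all l, m *)
Definition finitely_aligned : Prop :=
  forall l m : Mor G, exists L : list (Mor G * Mor G),
    forall a b : Mor G, src l = rng a -> src m = rng b ->
      comp l a = comp m b -> deg (comp l a) = nnmax (deg l) (deg m) ->
      In (a, b) L.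

(* data of a graph morphism x : Omega_{k, pdeg} -> G:
   pmor p q = x(p,q) and pobj p = the vertex x(p); values outside
   p <= q <= pdeg are irrelevant. *)
Record kpath := KPath {
  pdeg : ENN k;
  pmor : NN k -> NN k -> Mor G;
  pobj : NN k -> Obj G
}.

Definition is_graph_morphism (x : kpath) : Prop :=
  (forall p, le_e p (pdeg x) -> pmor x p p = idm (pobj x p)) /\
  (forall p q, nnle p q -> le_e q (pdeg x) ->
     rng (pmor x p q) = pobj x p /\ src (pmor x p q) = pobj x q /\
     deg (pmor x p q) = nnsub q p) /\
  (forall p q r, nnle p q -> nnle q r -> le_e r (pdeg x) ->
     comp (pmor x p q) (pmor x q r) = pmor x p r).

Definition is_boundary (x : kpath) : Prop :=
  is_graph_morphism x /\
  exists nx : NN k, le_e nx (pdeg x) /\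
    forall p : NN k, nnle nx p -> le_e p (pdeg x) ->
      forall i : 'I_k, pdeg x i = Some (p i) ->
        forall l : Mor G, rng l = pobj x p -> deg l <> nnbasis i.

Definition shift (p : NN k) (x : kpath) : kpath :=
  KPath (sub_e (pdeg x) p) (fun a b => pmor x (nnadd a p) (nnadd b p))
        (fun a => pobj x (nnadd a p)).

Definition concat_spec (l : Mor G) (x z : kpath) : Prop :=
  is_graph_morphism z /\
  (forall i, pdeg z i = add_e (deg l) (pdeg x) i) /\
  pmor z (nn0 k) (deg l) = l /\
  (forall a b, nnle a b -> le_e b (pdeg x) ->
     pmor z (nnadd a (deg l)) (nnadd b (deg l)) = pmor x a b).

Definition concat (l : Mor G) (x : kpath) : kpath :=
  epsilon (inhabits x) (concat_spec l x).

(* objects: G^0 (inl) and representatives (x;m) of V_G (inr) *)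
Definition BObj := (Obj G + (kpath * NN k))%type.
(* morphisms: G (inl) and representatives (x;(m,n)) of P_G (inr) *)
Definition BMor := (Mor G + (kpath * NN k * NN k))%type.

Definition validO (v : BObj) : Prop :=
  match v with
  | inl _ => True
  | inr (x, m) => is_boundary x /\ ~~ le_e m (pdeg x)
  end.

Definition validM (a : BMor) : Prop :=
  match a with
  | inl _ => True
  | inr (x, m, n) => is_boundary x /\ nnle m n /\ ~~ le_e n (pdeg x)
  end.

(* equality of objects of \bar G : equality on G^0, ~~ (approx) on V_G *)
Definition eqO (v w : BObj) : Prop :=
  match v, w with
  | inl u, inl u' => u = u'
  | inr (x, m), inr (y, p) =>
      pobj x (meet_e m (pdeg x)) = pobj y (meet_e p (pdeg y)) /\
      nnsub m (meet_e m (pdeg x)) = nnsub p (meet_e p (pdeg y))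
  | _, _ => False
  end.

(* equality of morphisms of \bar G : equality on G, ~ on P_G *)
Definition eqM (a b : BMor) : Prop :=
  match a, b with
  | inl l, inl l' => l = l'
  | inr (x, m, n), inr (y, p, q) =>
      pmor x (meet_e m (pdeg x)) (meet_e n (pdeg x)) =
        pmor y (meet_e p (pdeg y)) (meet_e q (pdeg y)) /\
      nnsub m (meet_e m (pdeg x)) = nnsub p (meet_e p (pdeg y)) /\
      nnsub n m = nnsub q p
  | _, _ => False
  end.

Definition bdeg (a : BMor) : NN k :=
  match a with
  | inl l => deg l
  | inr (x, m, n) => nnsub n m
  end.

Definition brng (a : BMor) : BObj :=
  match a with
  | inl l => inl (rng l)
  | inr (x, m, n) => if le_e m (pdeg x) then inl (pobj x m) else inr (x, m)
  end.

Definition bsrc (a : BMor) : BObj :=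
  match a with
  | inl l => inl (src l)
  | inr (x, m, n) => inr (x, n)
  end.

(* composition (meaningful when bsrc a ~ brng b) *)
Definition bcomp (a b : BMor) : BMor :=
  match a, b with
  | inl l, inl l' => inl (comp l l')
  | inl l, inr (x, m, n) =>
      inr (concat l (shift m x), nn0 k, nnsub (nnadd (deg l) n) m)
  | inr (x, m, n), inr (y, p, q) =>
      inr (concat (pmor x (nn0 k) (meet_e n (pdeg x)))
                  (shift (meet_e p (pdeg y)) y),
           m, nnsub (nnadd n q) p)
  | inr _, inl _ => a
  end.

Definition ext_row_finite : Prop :=
  forall v : BObj, validO v -> forall n : NN k,
    exists L : list BMor,
      forall a : BMor, validM a -> eqO (brng a) v -> bdeg a = n ->
        exists a', In a' L /\ eqM a a'.

(* \bar G is finitely aligned: \bar G^min(l,m) is finite (up to the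
   identification of representatives) *)
Definition ext_finitely_aligned : Prop :=
  forall l m : BMor, validM l -> validM m ->
    exists L : list (BMor * BMor),
      forall a b : BMor, validM a -> validM b ->
        eqO (bsrc l) (brng a) -> eqO (bsrc m) (brng b) ->
        eqM (bcomp l a) (bcomp m b) ->
        bdeg (bcomp l a) = nnmax (bdeg l) (bdeg m) ->
        exists ab, In ab L /\ eqM a ab.1 /\ eqM b ab.2.

End KGraphs.

From Pilot Require Import Defs.
From Stdlib Require Import ClassicalEpsilon List.
From mathcomp Require Import all_boot zify.
(* Imported again so that [comp] means composition in a k-graph, not [ssrfun.comp]. *)
Import Defs.
Set Implicit Arguments.
Unset Strict Implicit.
Unset Printing Implicit Defensive.

(* A representative [x;(m,n)] of a morphism of the extension is determined, up to [~], by
   its base morphism [x(m /\ d(x), n /\ d(x))] in [G], the excess [m - m /\ d(x)] of its range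
   and its degree [n - m].  Morphisms with a given range and degree thus have base morphisms
   with a given range, bounded degree and a given excess, and there are finitely many of
   those when [G] is row-finite.  Composition in the extension is composition of base
   morphisms, and in each coordinate the base of [l] either stops at the boundary, so that
   nothing of [a] survives in [G], or is all of [l].  Hence for a minimal common extension
   [l a ~ m b] the base morphisms of [a] and [b] form a minimal common extension in [G] of
   those of [l] and [m], and they determine [(a, b)] up to [~]. *)

Lemma nnleP k (p q : NN k) : reflect (forall i, p i <= q i) (nnle p q).
Proof. exact: forallP. Qed.

Lemma le_eP k (p : NN k) (m : ENN k) :
  reflect (forall i, if m i is Some a then p i <= a else true) (le_e p m).
Proof. exact: forallP. Qed.

Lemma nnaddE k (a b : NN k) i : nnadd a b i = a i + b i. Proof. by rewrite ffunE. Qed.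
Lemma nnsubE k (a b : NN k) i : nnsub a b i = a i - b i. Proof. by rewrite ffunE. Qed.
Lemma nnmaxE k (a b : NN k) i : nnmax a b i = maxn (a i) (b i). Proof. by rewrite ffunE. Qed.
Lemma nn0E k i : nn0 k i = 0. Proof. by rewrite ffunE. Qed.
Lemma meet_eE k (p : NN k) m i :
  meet_e p m i = if m i is Some a then minn (p i) a else p i.
Proof. by rewrite ffunE. Qed.

Lemma nn_ext k (a b : NN k) : (forall i, a i = b i) -> a = b.
Proof. by move=> E; apply/ffunP. Qed.

Lemma nn_eqE k (a b : NN k) i : a = b -> a i = b i.
Proof. by move->. Qed.

Ltac nn_at i :=
  repeat match goal with
  | H : is_true (nnle _ _) |- _ => move/nnleP: H => H
  | H : is_true (le_e _ _) |- _ => move/le_eP: H => H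
  end;
  repeat match goal with
  | H : forall _, _ |- _ => move: (H i); clear H
  | H : @eq (NN _) _ _ |- _ => move: (nn_eqE i H); clear H
  end;
  rewrite /add_e /sub_e;
  repeat progress rewrite ?nnaddE ?nnsubE ?nnmaxE ?nn0E ?meet_eE;
  repeat match goal with
  | |- context [match ?f ?j with Some _ => _ | None => _ end] => case: (f j) => [?|] /=
  end.

Ltac nnlia :=
  first [ apply: nn_ext | apply/nnleP | apply/le_eP ];
  let i := fresh "i" in intro i; nn_at i; lia.

Lemma nnle_refl k (p : NN k) : nnle p p.
Proof. by nnlia. Qed.

Lemma nnle_trans k (p q r : NN k) : nnle p q -> nnle q r -> nnle p r.
Proof. by move=> *; nnlia. Qed.

Lemma nnle0 k (p : NN k) : nnle (nn0 k) p.
Proof. by nnlia. Qed.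

Lemma le_e0 k (m : ENN k) : le_e (nn0 k) m.
Proof. by nnlia. Qed.

Lemma le_e_trans k (p q : NN k) m : nnle p q -> le_e q m -> le_e p m.
Proof. by move=> *; nnlia. Qed.

Lemma le_e_ext k (p : NN k) (m m' : ENN k) : (forall i, m i = m' i) -> le_e p m = le_e p m'.
Proof. by move=> E; apply/le_eP/le_eP => H i; move: (H i); rewrite E. Qed.

Lemma meet_e_ext k (p : NN k) (m m' : ENN k) :
  (forall i, m i = m' i) -> meet_e p m = meet_e p m'.
Proof. by move=> E; apply: nn_ext => i; rewrite !meet_eE E. Qed.

Lemma meet_e_le k (p : NN k) m : le_e (meet_e p m) m.
Proof. by nnlia. Qed.

Lemma meet_e_mono k (p q : NN k) m : nnle p q -> nnle (meet_e p m) (meet_e q m).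
Proof. by move=> *; nnlia. Qed.

Lemma meet_e_id k (p : NN k) m : le_e p m -> meet_e p m = p.
Proof. by move=> *; nnlia. Qed.

Lemma finite_transversal (A B : Type) (P : A -> Prop) (f : A -> B) (K : list B) :
  (forall a, P a -> In (f a) K) ->
  exists L : list A, forall a, P a -> exists a', In a' L /\ f a = f a'.
Proof.
elim: K P => [|b K IH] P HP; first by exists nil => a /HP.
have [L HL] : exists L : list A, forall a, P a /\ f a <> b -> exists a', In a' L /\ f a = f a'.
  by apply: IH => a [/HP [->|] //].
case: (classic (exists2 a0, P a0 & f a0 = b)) => [[a0 Pa0 Ea0]|Hb].
  exists (a0 :: L) => a Pa; case: (classic (f a = b)) => [->|Hab].
    by exists a0; split; [left|].
  by have [a' [? ?]] := HL a (conj Pa Hab); exists a'; split; [right|].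
exists L => a Pa; apply: HL; split=> // Hab; apply: Hb; by exists a.
Qed.

Lemma mem_In (T : eqType) (x : T) (s : seq T) : x \in s -> In x s.
Proof. elim: s => //= y s IH; rewrite in_cons => /orP [/eqP->|/IH]; auto. Qed.

Lemma nnle_finite k (n : NN k) : exists Q : list (NN k), forall q, nnle q n -> In q Q.
Proof.
pose N := \max_(i < k) n i.
exists (List.map (fun f : {ffun 'I_k -> 'I_N.+1} => [ffun i => val (f i)] : NN k)
   (enum {ffun 'I_k -> 'I_N.+1})).
move=> q /nnleP Hq; apply/in_map_iff.
exists [ffun i => inord (q i)]; split; last by apply: mem_In; rewrite mem_enum.
apply: nn_ext => i; rewrite !ffunE /= inordK //.
by have := Hq i; have := @leq_bigmax 'I_k (fun i => n i) i; rewrite -/N; lia.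
Qed.

Section Factorisation.
Variables (k : nat) (G : kgraph k).
Implicit Types (l a b c : Mor G) (p q r : NN k).

Lemma factorisation_unique a1 b1 a2 b2 : src a1 = rng b1 -> src a2 = rng b2 ->
  comp a1 b1 = comp a2 b2 -> deg a1 = deg a2 -> a1 = a2 /\ b1 = b2.
Proof.
move=> S1 S2 E D.
have [[p q] [_ Hu]] := unique_fact (deg_comp S1).
have U1 := Hu (a1, b1) (conj S1 (conj erefl (conj erefl erefl))).
have Db : deg b2 = deg b1.
  by have := deg_comp S1; rewrite E (deg_comp S2) D => /esym ?; nnlia.
have U2 := Hu (a2, b2) (conj S2 (conj (esym E) (conj (esym D) Db))).
by rewrite U1 in U2; case: U2.
Qed.

Lemma deg0_idm l : deg l = nn0 k -> l = idm (rng l).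
Proof.
move=> D; have [-> //] : idm (rng l) = l /\ l = idm (src l).
by apply: factorisation_unique; rewrite ?src_idm ?rng_idm ?comp_idl ?comp_idr ?deg_idm ?D.
Qed.

Definition is_seg l p q (m : Mor G) :=
  exists a c, [/\ src a = rng m, src m = rng c, comp a (comp m c) = l,
                  deg a = p & deg m = nnsub q p].

Definition seg l p q : Mor G := epsilon (inhabits l) (is_seg l p q).

Lemma is_seg_exists l p q : nnle p q -> nnle q (deg l) -> exists m, is_seg l p q m.
Proof.
move=> Hpq Hq.
have [[a r] [[Sar [Car [Da Dr]]] _]] := unique_fact (l := l) (m := p) (n := nnsub (deg l) p)
  ltac:(nnlia).
have [[m c] [[Smc [Cmc [Dm Dc]]] _]] := unique_fact (l := r) (m := nnsub q p) (n := nnsub (deg l) q)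
  ltac:(rewrite Dr; nnlia).
rewrite /= in Sar Car Da Dr Smc Cmc Dm Dc.
exists m, a, c; split=> //; last by rewrite Cmc.
by rewrite Sar -Cmc rng_comp.
Qed.

Lemma segP l p q : nnle p q -> nnle q (deg l) -> is_seg l p q (seg l p q).
Proof. by move=> Hpq Hq; apply: epsilon_spec; apply: is_seg_exists. Qed.

Lemma seg_unique l p q m : nnle p q -> nnle q (deg l) -> is_seg l p q m -> seg l p q = m.
Proof.
move=> Hpq Hq [a2 [c2 [S2 T2 E2 D2 D2']]].
have [a1 [c1 [S1 T1 E1 D1 D1']]] := segP Hpq Hq.
have [_ E] : a1 = a2 /\ comp (seg l p q) c1 = comp m c2.
  by apply: factorisation_unique; rewrite ?rng_comp ?E1 ?E2 ?D1 ?D2.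
by have [] := factorisation_unique T1 T2 E (etrans D1' (esym D2')).
Qed.

Lemma seg_deg l p q : nnle p q -> nnle q (deg l) -> deg (seg l p q) = nnsub q p.
Proof. by move=> Hpq Hq; have [a [c []]] := segP Hpq Hq. Qed.

Lemma seg_full l : seg l (nn0 k) (deg l) = l.
Proof.
apply: seg_unique; [exact: nnle0 | exact: nnle_refl |].
exists (idm (rng l)), (idm (src l)); rewrite src_idm rng_idm comp_idr comp_idl deg_idm.
by split=> //; nnlia.
Qed.

Lemma seg_comp l p q r : nnle p q -> nnle q r -> nnle r (deg l) ->
  src (seg l p q) = rng (seg l q r) /\ comp (seg l p q) (seg l q r) = seg l p r.
Proof.
move=> Hpq Hqr Hr.
have Hpr := nnle_trans Hpq Hqr.
have [a [c [S1 T1 E1 D1 D2]]] := segP Hpr Hr.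
set m := seg l p r in S1 T1 E1 D1 D2 *.
have [[m1 m2] [[S [C [F1 F2]]] _]] :=
  unique_fact (l := m) (m := nnsub q p) (n := nnsub r q) ltac:(rewrite D2; nnlia).
rewrite /= in S C F1 F2.
have Rm1 : rng m1 = rng m by rewrite -C rng_comp.
have Sm2 : src m2 = rng c by rewrite -T1 -C src_comp.
have Am : comp m1 (comp m2 c) = comp m c by rewrite -comp_assoc // C.
have -> : seg l p q = m1.
  apply: seg_unique Hpq (nnle_trans Hqr Hr) _; exists a, (comp m2 c).
  by split; rewrite ?Am ?E1 ?rng_comp // S1 Rm1.
have -> : seg l q r = m2.
  apply: seg_unique Hqr Hr _; exists (comp a m1), c; split=> //.
  - by rewrite src_comp // S1 Rm1.
  - by rewrite comp_assoc ?Am ?E1 ?rng_comp // S1 Rm1.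
  - by rewrite deg_comp ?D1 ?F1 ?S1 ?Rm1 //; nnlia.
by rewrite C.
Qed.

Lemma seg_rng l p q : nnle p q -> nnle q (deg l) -> rng (seg l p q) = rng (seg l p p).
Proof.
move=> Hpq Hq; have [S <-] := seg_comp (nnle_refl p) Hpq Hq.
by rewrite rng_comp.
Qed.

Lemma seg_src l p q : nnle p q -> nnle q (deg l) -> src (seg l p q) = rng (seg l q q).
Proof. by move=> Hpq Hq; have [] := seg_comp Hpq (nnle_refl q) Hq. Qed.

Lemma seg_id l p : nnle p (deg l) -> seg l p p = idm (rng (seg l p p)).
Proof. by move=> Hp; apply: deg0_idm; rewrite seg_deg ?nnle_refl //; nnlia. Qed.

Lemma seg_prefix l1 l2 p q : src l1 = rng l2 -> nnle p q -> nnle q (deg l1) ->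
  seg (comp l1 l2) p q = seg l1 p q.
Proof.
move=> S Hpq Hq.
have [a [c [S1 T1 E1 D1 D2]]] := segP Hpq Hq.
have Sc : src c = rng l2 by rewrite -S -E1 !src_comp // rng_comp.
apply: seg_unique => //; first by rewrite deg_comp //; nnlia.
exists a, (comp c l2); split=> //; first by rewrite rng_comp.
by rewrite -(comp_assoc T1 Sc) -comp_assoc ?E1 ?src_comp ?rng_comp.
Qed.

Lemma seg_suffix l1 l2 p q : src l1 = rng l2 -> nnle p q -> nnle q (deg l2) ->
  seg (comp l1 l2) (nnadd (deg l1) p) (nnadd (deg l1) q) = seg l2 p q.
Proof.
move=> S Hpq Hq.
have [a [c [S1 T1 E1 D1 D2]]] := segP Hpq Hq.
have Ra : rng a = rng l2 by rewrite -E1 !rng_comp.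
apply: seg_unique; [by nnlia | by rewrite deg_comp //; nnlia |].
exists (comp l1 a), c; split=> //.
- by rewrite src_comp ?Ra.
- by rewrite comp_assoc ?E1 ?Ra ?rng_comp.
- by rewrite deg_comp ?D1 ?Ra.
- by rewrite D2; nnlia.
Qed.

End Factorisation.

Section GraphMorphism.
Variables (k : nat) (G : kgraph k) (x : kpath G).
Hypothesis Hx : is_graph_morphism x.
Implicit Types p q r : NN k.

Lemma pmor_idm p : le_e p (pdeg x) -> pmor x p p = idm (pobj x p).
Proof. by case: Hx => H _; apply: H. Qed.

Lemma rng_pmor p q : nnle p q -> le_e q (pdeg x) -> rng (pmor x p q) = pobj x p.
Proof. by case: Hx => _ [H _] Hpq Hq; have [] := H p q Hpq Hq. Qed.

Lemma src_pmor p q : nnle p q -> le_e q (pdeg x) -> src (pmor x p q) = pobj x q.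
Proof. by case: Hx => _ [H _] Hpq Hq; have [_ []] := H p q Hpq Hq. Qed.

Lemma deg_pmor p q : nnle p q -> le_e q (pdeg x) -> deg (pmor x p q) = nnsub q p.
Proof. by case: Hx => _ [H _] Hpq Hq; have [_ []] := H p q Hpq Hq. Qed.

Lemma pmor_comp p q r : nnle p q -> nnle q r -> le_e r (pdeg x) ->
  comp (pmor x p q) (pmor x q r) = pmor x p r.
Proof. by case: Hx => _ [_ H]; apply: H. Qed.

Lemma seg_pmor p q r : nnle p q -> nnle q r -> le_e r (pdeg x) ->
  seg (pmor x (nn0 k) r) p q = pmor x p q.
Proof.
move=> Hpq Hqr Hr.
have Hq := le_e_trans Hqr Hr; have Hp := le_e_trans Hpq Hq.
apply: seg_unique => //; first by rewrite deg_pmor ?nnle0 //; nnlia.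
exists (pmor x (nn0 k) p), (pmor x q r); split.
- by rewrite src_pmor ?nnle0 // rng_pmor.
- by rewrite src_pmor // rng_pmor.
- by rewrite pmor_comp // pmor_comp ?nnle0 //; exact: nnle_trans Hpq Hqr.
- by rewrite deg_pmor ?nnle0 //; nnlia.
- by rewrite deg_pmor.
Qed.

Lemma graph_morphism_shift p : le_e p (pdeg x) -> is_graph_morphism (shift p x).
Proof.
move=> Hp; have Hsh b : le_e b (sub_e (pdeg x) p) -> le_e (nnadd b p) (pdeg x) by move=> *; nnlia.
split; [|split] => /=.
- by move=> a /Hsh; apply: pmor_idm.
- move=> a b Hab /Hsh Hb; have Hab' : nnle (nnadd a p) (nnadd b p) by nnlia.
  by rewrite rng_pmor // src_pmor // deg_pmor //; split=> //; split=> //; nnlia.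
- by move=> a b c Hab Hbc /Hsh Hc; apply: pmor_comp => //; nnlia.
Qed.

End GraphMorphism.

Section Concatenation.
Variables (k : nat) (G : kgraph k) (l : Mor G) (x : kpath G).
Hypotheses (Hx : is_graph_morphism x) (Hs : src l = pobj x (nn0 k)).
Implicit Types a b c : NN k.

(* The initial segment [(l x)(0, c)]; [concat_path] reads [(l x)(a, b)] off it. *)
Definition concat_prefix c := comp l (pmor x (nn0 k) (nnsub c (deg l))).

Lemma concat_prefix_src c : le_e c (add_e (deg l) (pdeg x)) ->
  src l = rng (pmor x (nn0 k) (nnsub c (deg l))).
Proof. by move=> Hc; rewrite rng_pmor ?nnle0 //; nnlia. Qed.

Lemma concat_prefix_deg c : le_e c (add_e (deg l) (pdeg x)) -> nnle c (deg (concat_prefix c)).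
Proof.
move=> Hc; have S := concat_prefix_src Hc.
rewrite /concat_prefix deg_comp // deg_pmor ?nnle0 //; nnlia.
Qed.

Lemma concat_prefix_ext b c : nnle b c -> le_e c (add_e (deg l) (pdeg x)) ->
  src (concat_prefix b) = rng (pmor x (nnsub b (deg l)) (nnsub c (deg l))) /\
  concat_prefix c = comp (concat_prefix b) (pmor x (nnsub b (deg l)) (nnsub c (deg l))).
Proof.
move=> Hbc Hc.
have Hc' : le_e (nnsub c (deg l)) (pdeg x) by nnlia.
have Hbc' : nnle (nnsub b (deg l)) (nnsub c (deg l)) by nnlia.
have Hb' := le_e_trans Hbc' Hc'.
have S : src (pmor x (nn0 k) (nnsub b (deg l))) = rng (pmor x (nnsub b (deg l)) (nnsub c (deg l))).
  by rewrite src_pmor ?nnle0 // rng_pmor.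
have Sl : src l = rng (pmor x (nn0 k) (nnsub b (deg l))) by rewrite rng_pmor ?nnle0.
split; first by rewrite src_comp.
by rewrite /concat_prefix comp_assoc // pmor_comp ?nnle0.
Qed.

Lemma seg_concat_prefix a b c : nnle a b -> nnle b c -> le_e c (add_e (deg l) (pdeg x)) ->
  seg (concat_prefix c) a b = seg (concat_prefix b) a b.
Proof.
move=> Hab Hbc Hc; have [S ->] := concat_prefix_ext Hbc Hc.
by rewrite seg_prefix // concat_prefix_deg //; exact: le_e_trans Hbc Hc.
Qed.

Definition concat_path : kpath G :=
  KPath (add_e (deg l) (pdeg x)) (fun a b => seg (concat_prefix b) a b)
        (fun a => rng (seg (concat_prefix a) a a)).

Lemma concat_path_graph_morphism : is_graph_morphism concat_path.
Proof.
split; [|split] => /=.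
- by move=> a Ha; apply: seg_id; apply: concat_prefix_deg.
- move=> a b Hab Hb; have Db := concat_prefix_deg Hb.
  rewrite seg_rng // (seg_concat_prefix (nnle_refl a) Hab Hb) seg_src // seg_deg //.
- move=> a b c Hab Hbc Hc.
  rewrite -(seg_concat_prefix Hab Hbc Hc).
  by have [_ ->] := seg_comp Hab Hbc (concat_prefix_deg Hc).
Qed.

Lemma concat_path_spec : concat_spec l x concat_path.
Proof.
split; first exact: concat_path_graph_morphism.
split=> //; split => /=.
- rewrite /concat_prefix (_ : nnsub (deg l) (deg l) = nn0 k); last by nnlia.
  by rewrite pmor_idm ?le_e0 // -Hs comp_idr seg_full.
- move=> a b Hab Hb.
  have Ha := le_e_trans Hab Hb.
  have Sa : src l = rng (pmor x (nn0 k) a) by rewrite rng_pmor ?nnle0.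
  have Sab : src (pmor x (nn0 k) a) = rng (pmor x a b) by rewrite src_pmor ?nnle0 // rng_pmor.
  have Sla : src (comp l (pmor x (nn0 k) a)) = rng (pmor x a b) by rewrite src_comp.
  rewrite /concat_prefix (_ : nnsub (nnadd b (deg l)) (deg l) = b); last by nnlia.
  rewrite -(pmor_comp Hx (nnle0 _) Hab Hb) -comp_assoc //.
  have := seg_suffix Sla (nnle0 (deg (pmor x a b))) (nnle_refl _).
  rewrite seg_full deg_comp // deg_pmor ?nnle0 // deg_pmor //.
  by congr (seg _ _ _ = _); nnlia.
Qed.

End Concatenation.

Section ConcatShift.
Variables (k : nat) (G : kgraph k).

Lemma concatP (l : Mor G) x : is_graph_morphism x -> src l = pobj x (nn0 k) ->
  concat_spec l x (concat l x).
Proof. by move=> Hx Hs; apply: epsilon_spec; exists (concat_path l x); apply: concat_path_spec. Qed.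

Lemma concat_pmor (l : Mor G) x z a t : concat_spec l x z -> nnle a (deg l) -> le_e t (pdeg x) ->
  pmor z a (nnadd (deg l) t) = comp (seg l a (deg l)) (pmor x (nn0 k) t).
Proof.
move=> [Zg [Zd [Z0 Zs]]] Ha Ht.
have Hdt : le_e (nnadd (deg l) t) (pdeg z) by rewrite (le_e_ext _ Zd); nnlia.
have Hl : nnle (deg l) (nnadd (deg l) t) by nnlia.
have Ex : pmor z (deg l) (nnadd (deg l) t) = pmor x (nn0 k) t.
  by rewrite -Zs ?nnle0 //; congr pmor; nnlia.
have Hl' := le_e_trans Hl Hdt.
have -> : seg l a (deg l) = pmor z a (deg l) by rewrite -{1}Z0 seg_pmor ?nnle_refl.
by rewrite -Ex pmor_comp.
Qed.

Lemma concat_shift_pmor (L : Mor G) y p q a :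
  is_graph_morphism y -> nnle p q -> le_e q (pdeg y) -> src L = pobj y p -> nnle a (deg L) ->
  (forall i, pdeg (concat L (shift p y)) i = add_e (deg L) (sub_e (pdeg y) p) i) /\
  pmor (concat L (shift p y)) a (nnadd (deg L) (nnsub q p)) =
    comp (seg L a (deg L)) (pmor y p q).
Proof.
move=> Hy Hpq Hq Hs Ha.
have Hp := le_e_trans Hpq Hq.
have Ep : nnadd (nn0 k) p = p by nnlia.
have Eq : nnadd (nnsub q p) p = q by nnlia.
have Z : concat_spec L (shift p y) (concat L (shift p y)).
  by apply: concatP; [apply: graph_morphism_shift | rewrite /= Ep].
have := concat_pmor (t := nnsub q p) Z Ha ltac:(by rewrite /=; nnlia).
by case: Z => _ [Zd _]; rewrite /= Ep Eq.
Qed.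

End ConcatShift.

Section Extension.
Variables (k : nat) (G : kgraph k).
Implicit Types (l a b : BMor G) (v w : BObj G) (x : kpath G) (t : kpath G * NN k * NN k).

Definition excess (x : kpath G) (m : NN k) : NN k := nnsub m (meet_e m (pdeg x)).

Definition base_obj v : Obj G :=
  match v with inl u => u | inr (x, m) => pobj x (meet_e m (pdeg x)) end.

Definition excess_obj v : NN k := if v is inr (x, m) then excess x m else nn0 k.

Definition base_mor a : Mor G :=
  match a with
  | inl l => l
  | inr (x, m, n) => pmor x (meet_e m (pdeg x)) (meet_e n (pdeg x))
  end.

Definition rng_excess a : NN k := if a is inr (x, m, _) then excess x m else nn0 k.

Definition bkey a : Mor G + (Mor G * NN k * NN k) :=
  if a is inl l then inl l else inr (base_mor a, rng_excess a, bdeg a).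

Lemma bkey_eqM a b : bkey a = bkey b -> eqM a b.
Proof. by case: a b => [l|[[x m] n]] [l'|[[y p] q]] //= [] => [|-> E ->]. Qed.

Lemma eqM_base_mor a b : eqM a b -> base_mor a = base_mor b.
Proof. by case: a b => [l|[[x m] n]] [l'|[[y p] q]] //= [->]. Qed.

Lemma eqM_bdeg a b : eqM a b -> bdeg a = bdeg b.
Proof. by case: a b => [l|[[x m] n]] [l'|[[y p] q]] //= => [->|[_ [_ ->]]]. Qed.

Lemma eqO_sym v w : eqO v w -> eqO w v.
Proof. by case: v w => [u|[x m]] [u'|[y p]] //= [-> ->]. Qed.

Lemma deg_base_mor x m n : validM (inr (x, m, n)) ->
  deg (base_mor (inr (x, m, n))) = nnsub (meet_e n (pdeg x)) (meet_e m (pdeg x)).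
Proof. by move=> [[Hx _] [Hmn _]]; rewrite deg_pmor ?meet_e_mono ?meet_e_le. Qed.

Lemma deg_base_mor_le a : validM a -> nnle (deg (base_mor a)) (bdeg a).
Proof.
case: a => [l _|[[x m] n] Va]; first exact: nnle_refl.
by rewrite deg_base_mor //; case: Va => _ [Hmn _]; nnlia.
Qed.

Lemma src_base_mor l : validM l -> src (base_mor l) = base_obj (bsrc l).
Proof.
by case: l => [l _|[[x m] n] [[Hx _] [Hmn _]]] //=; rewrite src_pmor ?meet_e_mono ?meet_e_le.
Qed.

Lemma rng_base_mor a v : validM a -> eqO (brng a) v ->
  rng (base_mor a) = base_obj v /\ rng_excess a = excess_obj v.
Proof.
case: a => [l _|[[x m] n] [[Hx _] [Hmn _]]] /=; first by case: v => // u ->.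
rewrite rng_pmor ?meet_e_mono ?meet_e_le //.
case: ifP => Hm; case: v => [u|[y p]] //= <-.
by rewrite meet_e_id //; split=> //; rewrite /excess; nnlia.
Qed.

Lemma bdeg_bcomp l t : validM l -> validM (inr t) ->
  bdeg (bcomp l (inr t)) = nnadd (bdeg l) (bdeg (inr t)).
Proof.
case: t => [[y p] q] + [_ [Hpq _]].
by case: l => [l _|[[x m] n] [_ [Hmn _]]] /=; nnlia.
Qed.

Lemma base_mor_bcomp l t : validM l -> validM (inr t) -> eqO (bsrc l) (brng (inr t)) ->
  base_mor (bcomp l (inr t)) = comp (base_mor l) (base_mor (inr t)).
Proof.
case: t => [[y p] q] + [[Hy _] [Hpq _]].
have Hq := meet_e_le q (pdeg y).
case: l => [l _|[[x m] n] [[Hx _] [Hmn _]]] /=; case: ifP => Hp //=.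
- move=> Hs; have Hpq' : nnle p (meet_e q (pdeg y)) by nnlia.
  have [Zd E] := concat_shift_pmor Hy Hpq' Hq Hs (nnle0 (deg l)).
  rewrite seg_full in E; rewrite meet_e_id ?le_e0 // (meet_e_id Hp) -E.
  by rewrite (meet_e_ext _ Zd); congr pmor; nnlia.
- move=> [Hs Hexc].
  have Hn := meet_e_le n (pdeg x).
  set L := pmor x (nn0 k) (meet_e n (pdeg x)).
  have DL : deg L = meet_e n (pdeg x) by rewrite deg_pmor ?nnle0 //; nnlia.
  have SL : src L = pobj y (meet_e p (pdeg y)) by rewrite src_pmor ?nnle0.
  have Ha : nnle (meet_e m (pdeg x)) (deg L) by rewrite DL meet_e_mono.
  have [Zd E] := concat_shift_pmor Hy (meet_e_mono (pdeg y) Hpq) Hq SL Ha.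
  rewrite DL seg_pmor ?meet_e_mono ?nnle_refl // in E; rewrite -E !(meet_e_ext _ Zd).
  by congr pmor; nnlia.
Qed.

(* With [dL], [dA] the degrees of the base morphisms of [l], [a] and [dl], [da] their degrees
   in the extension: in each coordinate either the base of [l] stops at the boundary and
   nothing of [a] is left in [G], or the base of [l] is all of [l]. *)
Definition truncation (dL dA dl da : NN k) :=
  forall i, (dL i <= dl i /\ dA i = 0) \/ (dL i = dl i /\ dA i <= da i).

Lemma truncation_max dL dA dM dB dl da dm db :
  truncation dL dA dl da -> truncation dM dB dm db ->
  nnadd dL dA = nnadd dM dB ->
  nnadd dl da = nnmax dl dm -> nnadd dm db = nnmax dl dm ->
  nnadd dL dA = nnmax dL dM.
Proof. by move=> Ta Tb *; apply: nn_ext => i; move: (Ta i) (Tb i); nn_at i; lia. Qed.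

Lemma truncation_base_mor l t : validM l -> validM (inr t) -> eqO (bsrc l) (brng (inr t)) ->
  truncation (deg (base_mor l)) (deg (base_mor (inr t))) (bdeg l) (bdeg (inr t)).
Proof.
case: t => [[y p] q] Vl Vt; rewrite deg_base_mor //; case: Vt => _ [Hpq _].
case: l Vl => [l _|[[x m] n] Vl] /=; case: ifP => Hp //=.
- by move=> _ i; right; nn_at i; lia.
- rewrite deg_base_mor //; case: Vl => _ [Hmn _] [_ Hexc] i; nn_at i; lia.
Qed.

Lemma base_mor_min l m s t : validM l -> validM m -> validM (inr s) -> validM (inr t) ->
  eqO (bsrc l) (brng (inr s)) -> eqO (bsrc m) (brng (inr t)) ->
  eqM (bcomp l (inr s)) (bcomp m (inr t)) ->
  bdeg (bcomp l (inr s)) = nnmax (bdeg l) (bdeg m) ->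
  [/\ src (base_mor l) = rng (base_mor (inr s)), src (base_mor m) = rng (base_mor (inr t)),
      comp (base_mor l) (base_mor (inr s)) = comp (base_mor m) (base_mor (inr t)) &
      deg (comp (base_mor l) (base_mor (inr s))) = nnmax (deg (base_mor l)) (deg (base_mor m))].
Proof.
move=> Vl Vm Vs Vt Es Et Est Dl.
have Ss : src (base_mor l) = rng (base_mor (inr s)).
  by rewrite src_base_mor //; case: (rng_base_mor Vs (eqO_sym Es)).
have St : src (base_mor m) = rng (base_mor (inr t)).
  by rewrite src_base_mor //; case: (rng_base_mor Vt (eqO_sym Et)).
have Cst : comp (base_mor l) (base_mor (inr s)) = comp (base_mor m) (base_mor (inr t)).
  by rewrite -!base_mor_bcomp // (eqM_base_mor Est).
have Dm : bdeg (bcomp m (inr t)) = nnmax (bdeg l) (bdeg m) by rewrite -(eqM_bdeg Est).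
split=> //; rewrite deg_comp //.
apply: (truncation_max (truncation_base_mor Vl Vs Es) (truncation_base_mor Vm Vt Et)).
- by rewrite -!deg_comp // Cst.
- by rewrite -bdeg_bcomp.
- by rewrite -bdeg_bcomp.
Qed.

Lemma row_finite_le : row_finite G -> forall (w : Obj G) (n : NN k),
  exists L, forall mu : Mor G, rng mu = w -> nnle (deg mu) n -> In mu L.
Proof.
move=> RF w n; have [Q HQ] := nnle_finite n.
suff [L HL] : exists L, forall mu : Mor G, rng mu = w -> In (deg mu) Q -> In mu L.
  by exists L => mu Hr /HQ; apply: HL.
elim: Q {HQ} => [|q Q [L HL]]; first by exists nil.
have [L1 HL1] := RF w q.
exists (L1 ++ L)%list => mu Hr [Eq|Iq]; apply/in_app_iff; [left; exact: HL1 | right; exact: HL].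
Qed.

Lemma row_finite_ext : row_finite G -> ext_row_finite G.
Proof.
move=> RF v _ n.
have [L HL] := row_finite_le RF (base_obj v) n.
pose P a := [/\ validM a, eqO (brng a) v & bdeg a = n].
have [|R HR] := @finite_transversal _ _ P bkey
  (List.map inl L ++ List.map (fun mu => inr (mu, excess_obj v, n)) L)%list.
  move=> a [Va Ea Da]; have [Ra Xa] := rng_base_mor Va Ea.
  have La : In (base_mor a) L by apply: HL; rewrite // -Da deg_base_mor_le.
  apply/in_app_iff; case: a Va Ea Da Ra Xa La => [l|t] _ _ Da _ Xa La.
    by left; apply/in_map_iff; exists l.
  by right; apply/in_map_iff; exists (base_mor (inr t)); rewrite -Xa -Da.
exists R => a Va Ea Da; have [a' [Ra' /bkey_eqM Ea']] := HR a (And3 Va Ea Da).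
by exists a'.
Qed.

Lemma eqO_brng_inl l (a : Mor G) : eqO (bsrc l) (brng (inl a)) ->
  exists2 l0, l = inl l0 & src l0 = rng a.
Proof. by case: l => [l0|[[x m] n]] //= E; exists l0. Qed.

Lemma bcomp_inr l t : exists u, bcomp l (inr t) = inr u.
Proof. by case: l t => [l|[[x m] n]] [[y p] q]; eexists. Qed.

Lemma ext_min_keys : finitely_aligned G -> forall l m, validM l -> validM m ->
  exists K, forall a b, validM a -> validM b ->
    eqO (bsrc l) (brng a) -> eqO (bsrc m) (brng b) ->
    eqM (bcomp l a) (bcomp m b) -> bdeg (bcomp l a) = nnmax (bdeg l) (bdeg m) ->
    In (bkey a, bkey b) K.
Proof.
move=> FA l m Vl Vm; have [K HK] := FA (base_mor l) (base_mor m).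
pose M := nnmax (bdeg l) (bdeg m).
exists (List.map (fun ab => (inl ab.1, inl ab.2)) K ++
        List.map (fun ab => (inr (ab.1, excess_obj (bsrc l), nnsub M (bdeg l)),
                             inr (ab.2, excess_obj (bsrc m), nnsub M (bdeg m)))) K)%list.
move=> a b Va Vb Ea Eb Eab Dab; apply/in_app_iff.
case: a Va Ea Eab Dab => [a|s] Va Ea Eab Dab; case: b Vb Eb Eab => [b|t] Vb Eb Eab.
- have [l0 El Sa] := eqO_brng_inl Ea; have [m0 Em Sb] := eqO_brng_inl Eb.
  subst l m; left; apply/in_map_iff; exists (a, b); split=> //.
  by apply: HK; rewrite //= -Eab.
- have [l0 El _] := eqO_brng_inl Ea; have [u Eu] := bcomp_inr m t.
  by move: Eab; rewrite El Eu.
- have [m0 Em _] := eqO_brng_inl Eb; have [u Eu] := bcomp_inr l s.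
  by move: Eab; rewrite Em Eu; case: u {Eu}  => [[? ?] ?].
- right; apply/in_map_iff.
  have [Ss St Cst Dst] := base_mor_min Vl Vm Va Vb Ea Eb Eab Dab.
  exists (base_mor (inr s), base_mor (inr t)); split; last exact: HK.
  have [_ Xs] := rng_base_mor Va (eqO_sym Ea); have [_ Xt] := rng_base_mor Vb (eqO_sym Eb).
  have Dt : bdeg (bcomp m (inr t)) = M by rewrite -(eqM_bdeg Eab).
  rewrite bdeg_bcomp // in Dab; rewrite bdeg_bcomp // in Dt.
  have -> : nnsub M (bdeg l) = bdeg (inr s) by rewrite /M -Dab; nnlia.
  have -> : nnsub M (bdeg m) = bdeg (inr t) by rewrite -Dt; nnlia.
  by rewrite -Xs -Xt.
Qed.

Lemma finitely_aligned_ext : finitely_aligned G -> ext_finitely_aligned G.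
Proof.
move=> FA l m Vl Vm; have [K HK] := ext_min_keys FA Vl Vm.
pose P (ab : BMor G * BMor G) :=
  [/\ validM ab.1 /\ validM ab.2, eqO (bsrc l) (brng ab.1), eqO (bsrc m) (brng ab.2),
      eqM (bcomp l ab.1) (bcomp m ab.2) & bdeg (bcomp l ab.1) = nnmax (bdeg l) (bdeg m)].
have [|L HL] := @finite_transversal _ _ P (fun ab => (bkey ab.1, bkey ab.2)) K.
  by move=> [a b] [[Va Vb] Ea Eb Eab Dab]; apply: HK.
exists L => a b Va Vb Ea Eb Eab Dab.
have [[a' b'] [Lab [/bkey_eqM Ea' /bkey_eqM Eb']]] := HL (a, b) (And5 (conj Va Vb) Ea Eb Eab Dab).
by exists (a', b').
Qed.

End Extension.

Theorem theorem3p26 (k : nat) (G : kgraph k) :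
  (finitely_aligned G -> ext_finitely_aligned G) /\
  (row_finite G -> ext_row_finite G).
Proof. by split; [apply: finitely_aligned_ext | apply: row_finite_ext]. Qed.
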